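(* Let $k_1,k_2,k_5$ be nonzero real constants and consider the equation $$u_t=k_5+\frac{1}{x}\bigl(k_1 x e^{k_2 u} u_x\bigr)_x$$ together with its Lie point symmetry $X=k_2 x\frac{\partial}{\partial x}+2\frac{\partial}{\partial u}$. The invariant solution of this equation corresponding to $X$ is $u(x,t)=\frac{1}{k_2}\ln\left(\frac{x^2}{p(t)}\right)$, where $p(t)$ satisfies the similarity reduction equation $$p'(t)+k_2k_5\,p(t)+4k_1=0,$$ whose solution is $p(t)=-\frac{4k_1}{k_2k_5}+c_1e^{-k_2k_5 t}$ with an arbitrary constant $c_1$.
   Context: A function $u=u(x,t)$ is an invariant solution of the equation corresponding to the infinitesimal symmetry $X=\xi\frac{\partial}{\partial x}+\tau\frac{\partial}{\partial t}+\eta\frac{\partial}{\partial u}$ if and only if (i) $u$ satisfies the equation and (ii) $u$ defines an invariant surface of $X$, i.e. $\xi\frac{\partial u}{\partial x}+\tau\frac{\partial u}{\partial t}-\eta=0$. Here $x>0$ is the cylindrical radial variable. *)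

From Stdlib Require Import Reals.
From Coquelicot Require Import Coquelicot.
Open Scope R_scope.

Definition in_time (a b : Rbar) (t : R) : Prop := Rbar_lt a t /\ Rbar_lt t b.

Definition u_x (u : R -> R -> R) (x t : R) : R := Derive (fun y => u y t) x.
Definition u_t (u : R -> R -> R) (x t : R) : R := Derive (fun s => u x s) t.

Definition is_solution (k1 k2 k5 : R) (a b : Rbar) (u : R -> R -> R) : Prop :=
  forall x t, 0 < x -> in_time a b t ->
    ex_derive (fun y => u y t) x /\
    ex_derive (fun s => u x s) t /\
    ex_derive (fun y => k1 * y * exp (k2 * u y t) * u_x u y t) x /\
    u_t u x t = k5 + / x * Derive (fun y => k1 * y * exp (k2 * u y t) * u_x u y t) x.

(* Invariant surface condition for X = xi d/dx + tau d/dt + eta d/du. *)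
Definition invariant_surface (xi tau eta : R -> R -> R -> R) (a b : Rbar)
  (u : R -> R -> R) : Prop :=
  forall x t, 0 < x -> in_time a b t ->
    xi x t (u x t) * u_x u x t + tau x t (u x t) * u_t u x t - eta x t (u x t) = 0.

Definition invariant_solution (k1 k2 k5 : R) (xi tau eta : R -> R -> R -> R)
  (a b : Rbar) (u : R -> R -> R) : Prop :=
  is_solution k1 k2 k5 a b u /\ invariant_surface xi tau eta a b u.

Definition X_xi (k2 : R) (x t v : R) : R := k2 * x.
Definition X_tau (x t v : R) : R := 0.
Definition X_eta (x t v : R) : R := 2.

From Stdlib Require Import Reals Lra.
From Coquelicot Require Import Coquelicot.
Open Scope R_scope.

(* Invariance under X means k2 x u_x = 2, so u = (2/k2) ln x + u(1,t); writing
   p(t) = exp(-k2 u(1,t)) this is exactly u = (1/k2) ln (x^2 / p(t)).  For this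
   ansatz the flux k1 x e^(k2 u) u_x equals 2 k1 x^2 / (k2 p), so the equation
   collapses to the linear ODE p' + k2 k5 p + 4 k1 = 0, whose solutions on an
   interval are obtained by noting that (p + 4k1/(k2k5)) e^(k2k5 t) is constant. *)

Lemma in_time_nonempty (a b : Rbar) : Rbar_lt a b -> exists t, in_time a b t.
Proof.
  unfold in_time; destruct a as [a| |], b as [b| |]; simpl; intros Hab;
    try contradiction.
  - exists ((a + b) / 2); lra.
  - exists (a + 1); split; [lra | exact I].
  - exists (b - 1); split; [exact I | lra].
  - exists 0; split; exact I.
Qed.

Lemma in_time_between (a b : Rbar) (t1 t2 s : R) :
  in_time a b t1 -> in_time a b t2 -> t1 <= s <= t2 -> in_time a b s.
Proof. unfold in_time; destruct a, b; simpl; intros; lra. Qed.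

Lemma locally_in_time (a b : Rbar) (t : R) : in_time a b t -> locally t (in_time a b).
Proof. exact (open_and _ _ (open_Rbar_gt a) (open_Rbar_lt b) t). Qed.

Lemma in_time_pos (x : R) : in_time (Finite 0) p_infty x <-> 0 < x.
Proof. unfold in_time; simpl; tauto. Qed.

Lemma is_derive_zero_const (a b : Rbar) (g : R -> R) :
  (forall t, in_time a b t -> is_derive g t 0) ->
  forall t1 t2, in_time a b t1 -> in_time a b t2 -> g t1 = g t2.
Proof.
  intros Hg.
  assert (Hlt : forall t1 t2, in_time a b t1 -> in_time a b t2 -> t1 < t2 -> g t1 = g t2).
  { intros t1 t2 H1 H2 H12. apply eq_is_derive; [|exact H12].
    intros s Hs. apply Hg, (in_time_between a b t1 t2); assumption. }
  intros t1 t2 H1 H2. destruct (Rtotal_order t1 t2) as [H | [-> | H]].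
  - auto.
  - reflexivity.
  - symmetry; auto.
Qed.

Lemma is_derive_inv_eq_ln (f : R -> R) (c : R) :
  (forall y, 0 < y -> is_derive f y (c / y)) -> forall x, 0 < x -> f x = c * ln x + f 1.
Proof.
  intros Hf x Hx.
  assert (Hconst : forall y, in_time (Finite 0) p_infty y ->
                      is_derive (fun z => f z - c * ln z) y 0).
  { intros y Hy. apply in_time_pos in Hy. auto_derive.
    - repeat split; [eexists; apply Hf|]; auto.
    - change (fun x => f x) with f. rewrite (is_derive_unique _ _ _ (Hf y Hy)). field; lra. }
  assert (E : f x - c * ln x = f 1 - c * ln 1).
  { apply (is_derive_zero_const _ _ _ Hconst); apply in_time_pos; lra. }
  rewrite ln_1 in E. lra.
Qed.

Lemma linear_ode_solution (a b : Rbar) (k c : R) (p : R -> R) :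
  Rbar_lt a b -> k <> 0 ->
  (forall t, in_time a b t -> ex_derive p t /\ Derive p t + k * p t + c = 0) ->
  exists c1, forall t, in_time a b t -> p t = - c / k + c1 * exp (- k * t).
Proof.
  intros Hab Hk Hp.
  set (q := fun t => (p t + c / k) * exp (k * t)).
  assert (Hq : forall t, in_time a b t -> is_derive q t 0).
  { intros t Ht. destruct (Hp t Ht) as [Ep Dp]. unfold q. auto_derive; [auto|].
    change (fun x => p x) with p.
    replace (Derive p t) with (- k * p t - c) by lra.
    field; exact Hk. }
  destruct (in_time_nonempty a b Hab) as [t0 Ht0].
  exists (q t0). intros t Ht.
  rewrite <- (is_derive_zero_const a b q Hq t t0 Ht Ht0). unfold q.
  rewrite Rmult_assoc, <- exp_plus.
  replace (k * t + - k * t) with 0 by ring.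
  rewrite exp_0. field; exact Hk.
Qed.

Lemma invariant_surface_X_iff (k2 : R) (a b : Rbar) (u : R -> R -> R) : k2 <> 0 ->
  invariant_surface (X_xi k2) X_tau X_eta a b u <->
  forall x t, 0 < x -> in_time a b t -> u_x u x t = 2 / (k2 * x).
Proof.
  unfold invariant_surface, X_xi, X_tau, X_eta. intros Hk2.
  split; intros H x t Hx Ht; specialize (H x t Hx Ht).
  - apply (Rmult_eq_reg_l (k2 * x)); [|apply Rmult_integral_contrapositive; lra].
    field_simplify; lra.
  - rewrite H. field; lra.
Qed.

Lemma log_form_of_u_x (k2 : R) (a b : Rbar) (u : R -> R -> R) : k2 <> 0 ->
  (forall x t, 0 < x -> in_time a b t ->
     ex_derive (fun y => u y t) x /\ u_x u x t = 2 / (k2 * x)) ->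
  forall x t, 0 < x -> in_time a b t -> u x t = / k2 * ln (x ^ 2 / exp (- k2 * u 1 t)).
Proof.
  intros Hk2 Hux x t Hx Ht.
  assert (Hd : forall y, 0 < y -> is_derive (fun z => u z t) y (2 / k2 / y)).
  { intros y Hy. destruct (Hux y t Hy Ht) as [Ey Uy].
    replace (2 / k2 / y) with (u_x u y t) by (rewrite Uy; field; lra).
    apply Derive_correct, Ey. }
  rewrite (is_derive_inv_eq_ln _ _ Hd x Hx).
  rewrite ln_div, ln_pow, ln_exp by (auto using exp_pos; nra).
  simpl INR. field; exact Hk2.
Qed.

Section Ansatz.

Variables (k1 k2 : R) (a b : Rbar) (u : R -> R -> R) (p : R -> R).
Hypothesis Hk2 : k2 <> 0.
Hypothesis Hp : forall t, in_time a b t -> 0 < p t.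
Hypothesis Hu : forall x t, 0 < x -> in_time a b t -> u x t = / k2 * ln (x ^ 2 / p t).

Let x2_div_p_pos (x t : R) : 0 < x -> in_time a b t -> 0 < x ^ 2 / p t.
Proof.
  intros Hx Ht. apply Rdiv_lt_0_compat; [nra | exact (Hp t Ht)].
Qed.

Lemma ansatz_is_derive_x (x t : R) : 0 < x -> in_time a b t ->
  is_derive (fun y => u y t) x (2 / (k2 * x)).
Proof.
  intros Hx Ht. pose proof (Hp t Ht).
  apply is_derive_ext_loc with (fun y => / k2 * ln (y ^ 2 / p t)).
  - apply (filter_imp (fun y => 0 < y)); [|exact (open_gt 0 x Hx)].
    intros y Hy. symmetry; exact (Hu y t Hy Ht).
  - auto_derive.
    + apply x2_div_p_pos; auto.
    + field. repeat split; lra.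
Qed.

Lemma ansatz_u_x (x t : R) : 0 < x -> in_time a b t -> u_x u x t = 2 / (k2 * x).
Proof. intros Hx Ht. apply is_derive_unique, ansatz_is_derive_x; auto. Qed.

Lemma ansatz_flux (x t : R) : 0 < x -> in_time a b t ->
  k1 * x * exp (k2 * u x t) * u_x u x t = 2 * k1 * x ^ 2 / (k2 * p t).
Proof.
  intros Hx Ht. pose proof (Hp t Ht).
  rewrite ansatz_u_x, Hu by auto.
  replace (k2 * (/ k2 * ln (x ^ 2 / p t))) with (ln (x ^ 2 / p t)) by (field; exact Hk2).
  rewrite exp_ln by (apply x2_div_p_pos; auto).
  field. repeat split; lra.
Qed.

Lemma ansatz_is_derive_flux (x t : R) : 0 < x -> in_time a b t ->
  is_derive (fun y => k1 * y * exp (k2 * u y t) * u_x u y t) x (4 * k1 * x / (k2 * p t)).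
Proof.
  intros Hx Ht. pose proof (Hp t Ht).
  apply is_derive_ext_loc with (fun y => 2 * k1 * y ^ 2 / (k2 * p t)).
  - apply (filter_imp (fun y => 0 < y)); [|exact (open_gt 0 x Hx)].
    intros y Hy. symmetry; exact (ansatz_flux y t Hy Ht).
  - auto_derive; [split; lra|]. field; split; lra.
Qed.

Lemma ansatz_is_derive_t (x t dp : R) : 0 < x -> in_time a b t ->
  is_derive p t dp -> is_derive (fun s => u x s) t (- dp / (k2 * p t)).
Proof.
  intros Hx Ht Hdp. pose proof (Hp t Ht).
  apply is_derive_ext_loc with (fun s => / k2 * ln (x ^ 2 / p s)).
  - apply (filter_imp (in_time a b)); [|exact (locally_in_time a b t Ht)].
    intros s Hs. symmetry; exact (Hu x s Hx Hs).
  - auto_derive.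
    + repeat split; [eexists; exact Hdp | lra | apply x2_div_p_pos; auto].
    + change (fun s => p s) with p. rewrite (is_derive_unique _ _ _ Hdp). field. repeat split; lra.
Qed.

Lemma ansatz_p_eq (t : R) : in_time a b t -> p t = exp (- k2 * u 1 t).
Proof.
  intros Ht. pose proof (Hp t Ht).
  rewrite Hu by (lra || exact Ht).
  rewrite pow1, ln_div, ln_1 by lra.
  replace (- k2 * (/ k2 * (0 - ln (p t)))) with (ln (p t)) by (field; exact Hk2).
  rewrite exp_ln; lra.
Qed.

Lemma ansatz_ex_derive_p (t : R) : in_time a b t ->
  ex_derive (fun s => u 1 s) t -> ex_derive p t.
Proof.
  intros Ht Eu. apply ex_derive_ext_loc with (fun s => exp (- k2 * u 1 s)).
  - apply (filter_imp (in_time a b)); [|exact (locally_in_time a b t Ht)].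
    intros s Hs. symmetry; exact (ansatz_p_eq s Hs).
  - auto_derive. exact Eu.
Qed.

Lemma ansatz_is_solution_iff (k5 : R) :
  is_solution k1 k2 k5 a b u <->
  forall t, in_time a b t -> ex_derive p t /\ Derive p t + k2 * k5 * p t + 4 * k1 = 0.
Proof.
  assert (Hpde : forall x t, 0 < x -> in_time a b t -> ex_derive p t ->
    (u_t u x t = k5 + / x * Derive (fun y => k1 * y * exp (k2 * u y t) * u_x u y t) x
     <-> Derive p t + k2 * k5 * p t + 4 * k1 = 0)).
  { intros x t Hx Ht Ep. pose proof (Hp t Ht).
    assert (Ut : u_t u x t = - Derive p t / (k2 * p t)).
    { apply is_derive_unique, ansatz_is_derive_t; auto. apply Derive_correct, Ep. }
    assert (Fx : Derive (fun y => k1 * y * exp (k2 * u y t) * u_x u y t) x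
                 = 4 * k1 * x / (k2 * p t)).
    { apply is_derive_unique, ansatz_is_derive_flux; auto. }
    rewrite Ut, Fx.
    replace (k5 + / x * (4 * k1 * x / (k2 * p t)))
      with (- (- k2 * k5 * p t - 4 * k1) / (k2 * p t)) by (field; repeat split; lra).
    split; intros E.
    - assert (D : Derive p t = - k2 * k5 * p t - 4 * k1).
      { transitivity (- (k2 * p t) * (- Derive p t / (k2 * p t))); [field; split; lra|].
        rewrite E. field; split; lra. }
      lra.
    - do 2 f_equal. lra. }
  split.
  - intros Hsol t Ht.
    destruct (Hsol 1 t Rlt_0_1 Ht) as [_ [Eu [_ E]]].
    assert (Ep : ex_derive p t) by exact (ansatz_ex_derive_p t Ht Eu).
    split; [exact Ep|]. apply (Hpde 1 t Rlt_0_1 Ht Ep), E.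
  - intros Hode x t Hx Ht. destruct (Hode t Ht) as [Ep E].
    repeat split.
    + eexists; apply ansatz_is_derive_x; auto.
    + eexists; apply ansatz_is_derive_t; auto. apply Derive_correct, Ep.
    + eexists; apply ansatz_is_derive_flux; auto.
    + apply (Hpde x t); auto.
Qed.

End Ansatz.

Theorem theorem4 (k1 k2 k5 : R) (a b : Rbar) (u : R -> R -> R) :
  k1 <> 0 -> k2 <> 0 -> k5 <> 0 -> Rbar_lt a b ->
  (invariant_solution k1 k2 k5 (X_xi k2) X_tau X_eta a b u <->
   exists p : R -> R,
     (forall t, in_time a b t -> 0 < p t) /\
     (forall x t, 0 < x -> in_time a b t -> u x t = / k2 * ln (x ^ 2 / p t)) /\
     (forall t, in_time a b t ->
        ex_derive p t /\ Derive p t + k2 * k5 * p t + 4 * k1 = 0) /\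
     (exists c1 : R, forall t, in_time a b t ->
        p t = - (4 * k1) / (k2 * k5) + c1 * exp (- (k2 * k5) * t))).
Proof.
  intros _ Hk2 Hk5 Hab.
  unfold invariant_solution. rewrite invariant_surface_X_iff by exact Hk2.
  split.
  - intros [Hsol Hux].
    set (p := fun t => exp (- k2 * u 1 t)).
    assert (Hp : forall t, in_time a b t -> 0 < p t) by (intros; apply exp_pos).
    assert (Hu : forall x t, 0 < x -> in_time a b t -> u x t = / k2 * ln (x ^ 2 / p t)).
    { apply log_form_of_u_x; [exact Hk2|].
      intros x t Hx Ht. split; [apply (Hsol x t Hx Ht) | exact (Hux x t Hx Ht)]. }
    pose proof (proj1 (ansatz_is_solution_iff k1 k2 a b u p Hk2 Hp Hu k5) Hsol) as Hode.
    exists p. split; [exact Hp|]. split; [exact Hu|]. split; [exact Hode|].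
    apply linear_ode_solution; [exact Hab | apply Rmult_integral_contrapositive; tauto |].
    exact Hode.
  - intros [p [Hp [Hu [Hode _]]]]. split.
    + apply (ansatz_is_solution_iff k1 k2 a b u p Hk2 Hp Hu k5), Hode.
    + exact (ansatz_u_x k2 a b u p Hk2 Hp Hu).
Qed.
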